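(* Let $P$ be a finite connected ranked poset with maximum rank $r$, and let $\sigma$ be any permutation of $\{0,1,\ldots,r\}$. Let $\mathcal{O}$ be an orbit of $\Phi_{\mathrm{row}(\sigma)}$ acting on $J(P)$. Then the distribution on $J(P)$ that is uniform on $\mathcal{O}$ and zero outside $\mathcal{O}$ is toggle-symmetric.
   Context: $P$ is ranked with rank function $\mathrm{rk}\colon P\to\mathbb{N}$ ($0$ in the image, $\mathrm{rk}(q)=\mathrm{rk}(p)+1$ when $q$ covers $p$). $J(P)$ is the set of order ideals of $P$. For $p\in P$, the toggle $\tau_p\colon J(P)\to J(P)$ sends $I$ to $I\cup\{p\}$ if $p\notin I$ and $p$ is minimal in $P\setminus I$, to $I\setminus\{p\}$ if $p\in I$ and $p$ is maximal in $I$, and to $I$ otherwise. $\tau_i$ is the composition of all $\tau_p$ with $\mathrm{rk}(p)=i$ (these commute). $\Phi_{\mathrm{row}(\sigma)}:=\tau_{\sigma(0)}\circ\tau_{\sigma(1)}\circ\cdots\circ\tau_{\sigma(r)}$. $\mathcal{T}^+_p(I)=1$ iff $p\notin I$ and $p$ minimal in $P\setminus I$; $\mathcal{T}^-_p(I)=1$ iff $p\in I$ and $p$ maximal in $I$ (else $0$). A distribution $\mu$ on $J(P)$ is toggle-symmetric if $\mathbb{E}(\mu;\mathcal{T}^+_p)=\mathbb{E}(\mu;\mathcal{T}^-_p)$ for all $p\in P$. *)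

From HB Require Import structures.
From mathcomp Require Import all_boot all_order all_algebra all_fingroup.
Set Implicit Arguments. Unset Strict Implicit. Unset Printing Implicit Defensive.
Import Order.TTheory GRing.Theory Num.Theory.

Open Scope order_scope.

Section Toggles.
Variables (d : Order.disp_t) (T : finPOrderType d).

Definition covers (p q : T) : bool :=
  (p < q) && [forall z : T, ~~ ((p < z) && (z < q))].

Definition rank_function (rk : T -> nat) : Prop :=
  (exists p : T, rk p = 0%N) /\ (forall p q : T, covers p q -> rk q = (rk p).+1).

Definition poset_connected : Prop :=
  forall x y : T, connect (fun a b : T => (a <= b) || (b <= a)) x y.

Definition order_ideal (I : {set T}) : bool :=
  [forall p : T, forall q : T, (p \in I) && (q <= p) ==> (q \in I)].

Definition JP : {set {set T}} := [set I : {set T} | order_ideal I].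

Definition min_outside (I : {set T}) (p : T) : bool :=
  (p \notin I) && [forall q : T, (q < p) ==> (q \in I)].
Definition max_inside (I : {set T}) (p : T) : bool :=
  (p \in I) && [forall q : T, (p < q) ==> (q \notin I)].

Definition toggle (p : T) (I : {set T}) : {set T} :=
  if min_outside I p then p |: I
  else if max_inside I p then I :\ p
  else I.

Definition toggle_rank (rk : T -> nat) (i : nat) : {set T} -> {set T} :=
  foldr (fun p f => toggle p \o f) id (enum [pred p : T | rk p == i]).

Definition Phi_row (rk : T -> nat) (r : nat) (sigma : {perm 'I_r.+1})
  : {set T} -> {set T} :=
  foldr (fun i f => toggle_rank rk (sigma i) \o f) id (enum 'I_r.+1).

Definition Tplus (p : T) (I : {set T}) : nat := min_outside I p.
Definition Tminus (p : T) (I : {set T}) : nat := max_inside I p.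

Definition expect (mu : {set T} -> rat) (f : {set T} -> nat) : rat :=
  (\sum_(I in JP) mu I * (f I)%:R)%R.

Definition toggle_symmetric (mu : {set T} -> rat) : Prop :=
  forall p : T, expect mu (Tplus p) = expect mu (Tminus p).

(* the orbit of I0 under a map F (I0 in J(P), on which F is a bijection) *)
Definition orbit_set (F : {set T} -> {set T}) (I0 : {set T}) : {set {set T}} :=
  [set I | fconnect F I0 I].

Definition uniform_on (O : {set {set T}}) (I : {set T}) : rat :=
  if I \in O then ((#|O|)%:R)^-1%R else 0%R.

End Toggles.

From HB Require Import structures.
From mathcomp Require Import all_boot all_order all_algebra all_fingroup.
Set Implicit Arguments. Unset Strict Implicit. Unset Printing Implicit Defensive.
Import Order.TTheory GRing.Theory.

(** Whether toggling [p] adds or removes it depends only on [p] and its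
    covers, which have ranks [rk p - 1] and [rk p + 1].  Split [Phi_row(sigma)]
    as [A o tau_(rk p) o B], where [B] toggles the ranks applied before [rk p].
    Along an orbit [p] is added as often as it is removed, so [T^+_p] and
    [T^-_p] have the same sum over the ideals [B X]; since toggling [p] swaps
    [T^+_p] and [T^-_p], that common value is also the sum of either statistic
    over the ideals [tau_(rk p) (B X)].  Finally, the sum of [T^+_p] over the
    orbit equals its sum over the [B X] if [B] does not toggle rank [rk p - 1],
    and otherwise (the orbit being [Phi]-stable and [A] not touching that
    rank) its sum over the [tau_(rk p) (B X)]; likewise for [T^-_p] and rank
    [rk p + 1]. *)

Section Covers.
Variables (d : Order.disp_t) (T : finPOrderType d).
Local Open Scope order_scope.

Lemma exists_cover_above (p q : T) : p < q -> exists2 c, covers p c & c <= q.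
Proof.
move=> pq; pose below z := #|[set w : T | w < z]|.
case: (arg_minnP below (P := fun z => (p < z) && (z <= q)) (i0 := q)).
  by rewrite pq lexx.
move=> c /andP[pc cq] cmin; exists c => //; rewrite /covers pc.
apply/forallP => z; apply/negP => /andP[pz zc].
have := cmin z; rewrite pz (le_trans (ltW zc) cq) => /(_ isT); apply/negP.
rewrite -ltnNge; apply: proper_card; apply/properP; split.
  by apply/subsetP => w; rewrite !inE => /lt_trans; apply.
by exists z; rewrite !inE ?zc ?ltxx.
Qed.

End Covers.

Section Toggles.
Variables (d : Order.disp_t) (T : finPOrderType d).
Local Open Scope order_scope.
Implicit Types (X Y J : {set T}) (p q x : T) (e : seq T).

Lemma exists_cover_below p q : q < p -> exists2 c, covers c p & q <= c.
Proof.
move=> qp; have := exists_cover_above (T := T^d) qp.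
case=> c pc cq; exists c => //; move: pc.
rewrite /covers /= ltEdual => /andP[-> /forallP cover]; apply/forallP => z.
by rewrite andbC; have := cover z; rewrite !ltEdual.
Qed.

Lemma idealP X :
  reflect (forall p q, p \in X -> q <= p -> q \in X) (order_ideal X).
Proof.
apply: (iffP forallP) => [H p q pX qp | H p].
  by have /forallP/(_ q)/implyP := H p; apply; rewrite pX qp.
by apply/forallP => q; apply/implyP => /andP[]; apply: H.
Qed.

Lemma min_outside_covers X p : order_ideal X ->
  min_outside X p = (p \notin X) && [forall q, covers q p ==> (q \in X)].
Proof.
move=> /idealP idX; congr (_ && _); apply/forallP/forallP => H q; apply/implyP.
  by move=> /andP[qp _]; apply: (implyP (H q)).
by move=> /exists_cover_below[c cp qc]; apply: idX (implyP (H c) cp) qc.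
Qed.

Lemma max_inside_covers X p : order_ideal X ->
  max_inside X p = (p \in X) && [forall q, covers p q ==> (q \notin X)].
Proof.
move=> /idealP idX; congr (_ && _); apply/forallP/forallP => H q; apply/implyP.
  by move=> /andP[pq _]; apply: (implyP (H q)).
move=> /exists_cover_above[c pc cq]; apply: contra (implyP (H c) pc) => qX.
exact: idX qX cq.
Qed.

Lemma Tplus_local X Y p : order_ideal X -> order_ideal Y ->
  (forall x, (x == p) || covers x p -> (x \in X) = (x \in Y)) ->
  Tplus p X = Tplus p Y.
Proof.
move=> idX idY XY; rewrite /Tplus !min_outside_covers // XY ?eqxx //.
congr (nat_of_bool (_ && _)); apply: eq_forallb => q.
by case: (boolP (covers q p)) => //= qp; rewrite XY // qp orbT.
Qed.

Lemma Tminus_local X Y p : order_ideal X -> order_ideal Y ->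
  (forall x, (x == p) || covers p x -> (x \in X) = (x \in Y)) ->
  Tminus p X = Tminus p Y.
Proof.
move=> idX idY XY; rewrite /Tminus !max_inside_covers // XY ?eqxx //.
congr (nat_of_bool (_ && _)); apply: eq_forallb => q.
by case: (boolP (covers p q)) => //= pq; rewrite XY // pq orbT.
Qed.

Lemma in_toggle_other q X x : x != q -> (x \in toggle q X) = (x \in X).
Proof.
move=> xq; rewrite /toggle; case: ifP => _; first by rewrite in_setU1 (negbTE xq).
by case: ifP => _ //; rewrite in_setD1 xq.
Qed.

Lemma max_inside_setU1 X p : order_ideal X -> min_outside X p ->
  max_inside (p |: X) p.
Proof.
move=> /idealP idX /andP[pX _]; rewrite /max_inside setU11.
apply/forallP => z; apply/implyP => pz; rewrite in_setU1 eq_sym (lt_eqF pz).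
by apply: contra pX => zX; apply: idX zX (ltW pz).
Qed.

Lemma min_outside_setD1 X p : order_ideal X -> max_inside X p ->
  min_outside (X :\ p) p.
Proof.
move=> /idealP idX /andP[pX _]; rewrite /min_outside setD11.
apply/forallP => z; apply/implyP => zp; rewrite in_setD1 (lt_eqF zp).
exact: idX pX (ltW zp).
Qed.

Lemma toggle_ideal q X : order_ideal X -> order_ideal (toggle q X).
Proof.
move=> idX; have idXP := idealP X idX; rewrite /toggle.
case: ifP => [/andP[qX /forallP minq] | _].
  apply/idealP => a b; rewrite !in_setU1 => /orP[/eqP-> | aX] ba.
    case: (eqVneq b q) => //= bq.
    by apply: (implyP (minq b)); rewrite lt_neqAle bq.
  by rewrite (idXP _ _ aX ba) orbT.
case: ifP => [/andP[qX /forallP maxq] | _] //.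
apply/idealP => a b; rewrite !in_setD1 => /andP[aq aX] ba.
rewrite (idXP _ _ aX ba) andbT; apply: contraTneq aX => bq; subst b.
by apply: (implyP (maxq a)); rewrite lt_neqAle eq_sym aq.
Qed.

Lemma toggleK q X : order_ideal X -> toggle q (toggle q X) = X.
Proof.
move=> idX; rewrite {2}/toggle; case minq: (min_outside X q).
  rewrite /toggle /min_outside setU11 max_inside_setU1 //.
  by rewrite setU1K //; case/andP: minq.
case maxq: (max_inside X q); last by rewrite /toggle minq maxq.
by rewrite /toggle min_outside_setD1 // setD1K //; case/andP: maxq.
Qed.

(** The third component says that [p] enters [J] exactly when [T^+_p J = 1]
    and leaves it exactly when [T^-_p J = 1]. *)
Lemma toggle_flip J p : order_ideal J ->
  [/\ Tplus p (toggle p J) = Tminus p J, Tminus p (toggle p J) = Tplus p J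
    & ((p \in toggle p J) : nat) + Tminus p J = ((p \in J) : nat) + Tplus p J].
Proof.
move=> idJ; rewrite /Tplus /Tminus /toggle.
case minp: (min_outside J p).
  have pJ : p \notin J by case/andP: minp.
  rewrite max_inside_setU1 //.
  by rewrite /max_inside /min_outside setU11 (negbTE pJ).
case maxp: (max_inside J p); last by rewrite minp maxp.
have pJ : p \in J by case/andP: maxp.
by rewrite min_outside_setD1 // /max_inside /min_outside setD11 pJ.
Qed.

Lemma foldr_toggle_ideal e X :
  order_ideal X -> order_ideal (foldr (@toggle _ T) X e).
Proof. by move=> idX; elim: e => //= q e; apply: toggle_ideal. Qed.

Lemma foldr_toggle_inj e X Y : order_ideal X -> order_ideal Y ->
  foldr (@toggle _ T) X e = foldr (@toggle _ T) Y e -> X = Y.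
Proof.
move=> idX idY; elim: e => //= q e IHe eqXY; apply: IHe.
rewrite -(toggleK q (foldr_toggle_ideal e idX)) eqXY.
by rewrite toggleK ?foldr_toggle_ideal.
Qed.

Lemma in_foldr_toggle_other e X x :
  x \notin e -> (x \in foldr (@toggle _ T) X e) = (x \in X).
Proof.
elim: e => //= q e IHe; rewrite in_cons negb_or => /andP[xq xe].
by rewrite in_toggle_other // IHe.
Qed.

Lemma Tplus_foldr_toggle e X p : order_ideal X ->
  p \notin e -> (forall x, covers x p -> x \notin e) ->
  Tplus p (foldr (@toggle _ T) X e) = Tplus p X.
Proof.
move=> idX pe coverse; apply: Tplus_local; rewrite ?foldr_toggle_ideal //.
by move=> x /orP[/eqP-> | /coverse xe]; rewrite in_foldr_toggle_other.
Qed.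

Lemma Tminus_foldr_toggle e X p : order_ideal X ->
  p \notin e -> (forall x, covers p x -> x \notin e) ->
  Tminus p (foldr (@toggle _ T) X e) = Tminus p X.
Proof.
move=> idX pe coverse; apply: Tminus_local; rewrite ?foldr_toggle_ideal //.
by move=> x /orP[/eqP-> | /coverse xe]; rewrite in_foldr_toggle_other.
Qed.

End Toggles.

Lemma big_stable (R : Type) (idx : R) (op : Monoid.com_law idx) (I : finType)
    (A : {set I}) (h : I -> I) (F : I -> R) :
  {in A &, injective h} -> {in A, forall x, h x \in A} ->
  \big[op/idx]_(x in A) F (h x) = \big[op/idx]_(x in A) F x.
Proof.
move=> h_inj hA; have imA : h @: A = A.
  apply/eqP; rewrite eqEcard card_in_imset // leqnn andbT.
  by apply/subsetP => _ /imsetP[x xA ->]; apply: hA.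
by rewrite -[in RHS]imA big_imset.
Qed.

Section Ranks.
Variables (d : Order.disp_t) (T : finPOrderType d) (rk : T -> nat).
Hypothesis rk_cover : forall p q : T, covers p q -> rk q = (rk p).+1.
Implicit Types (X Y J : {set T}) (p x : T) (s : seq nat).

Definition rank_enum (j : nat) : seq T := enum [pred q | rk q == j].

Definition toggle_ranks s X : {set T} :=
  foldr (@toggle _ T) X (flatten [seq rank_enum j | j <- s]).

Lemma mem_rank_enums s x :
  (x \in flatten [seq rank_enum j | j <- s]) = (rk x \in s).
Proof.
apply/flatten_mapP/idP => [[j js] | xs]; first by rewrite mem_enum inE => /eqP->.
by exists (rk x); rewrite ?mem_enum ?inE.
Qed.

Lemma toggle_ranks1 j X : toggle_ranks [:: j] X = toggle_rank rk j X.
Proof.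
rewrite /toggle_ranks /= cats0 /toggle_rank /rank_enum.
by elim: (enum _) => //= q e ->.
Qed.

Lemma toggle_ranks_cat s1 s2 X :
  toggle_ranks (s1 ++ s2) X = toggle_ranks s1 (toggle_ranks s2 X).
Proof. by rewrite /toggle_ranks map_cat flatten_cat foldr_cat. Qed.

Lemma toggle_ranks_cons j s X :
  toggle_ranks (j :: s) X = toggle_rank rk j (toggle_ranks s X).
Proof. by rewrite -cat1s toggle_ranks_cat toggle_ranks1. Qed.

Lemma Phi_row_toggle_ranks r (sigma : {perm 'I_r.+1}) X :
  Phi_row rk sigma X =
  toggle_ranks [seq nat_of_ord (sigma i) | i <- enum 'I_r.+1] X.
Proof.
by rewrite /Phi_row; elim: (enum _) => //= i e ->; rewrite toggle_ranks_cons.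
Qed.

Lemma toggle_ranks_ideal s X : order_ideal X -> order_ideal (toggle_ranks s X).
Proof. exact: foldr_toggle_ideal. Qed.

Lemma toggle_ranks_inj s X Y : order_ideal X -> order_ideal Y ->
  toggle_ranks s X = toggle_ranks s Y -> X = Y.
Proof. exact: foldr_toggle_inj. Qed.

Lemma in_toggle_ranks_other s X x :
  rk x \notin s -> (x \in toggle_ranks s X) = (x \in X).
Proof. by rewrite -mem_rank_enums; apply: in_foldr_toggle_other. Qed.

Lemma Tplus_toggle_ranks s X p : order_ideal X ->
  rk p \notin s -> (rk p).-1 \notin s -> Tplus p (toggle_ranks s X) = Tplus p X.
Proof.
move=> idX ps lower_ps; apply: Tplus_foldr_toggle; rewrite ?mem_rank_enums //.
by move=> x /rk_cover rkp; rewrite mem_rank_enums; rewrite rkp in lower_ps.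
Qed.

Lemma Tminus_toggle_ranks s X p : order_ideal X ->
  rk p \notin s -> (rk p).+1 \notin s -> Tminus p (toggle_ranks s X) = Tminus p X.
Proof.
move=> idX ps upper_ps; apply: Tminus_foldr_toggle; rewrite ?mem_rank_enums //.
by move=> x /rk_cover rkx; rewrite mem_rank_enums rkx.
Qed.

(** The toggles at the other elements of rank [rk p] touch neither [p] nor
    its covers, so [tau_(rk p)] acts on [T^+_p] and [T^-_p] as [toggle p]. *)
Lemma toggle_rank_flip J p : order_ideal J ->
  let K := toggle_rank rk (rk p) J in
  [/\ Tplus p K = Tminus p J, Tminus p K = Tplus p J
    & ((p \in K) : nat) + Tminus p J = ((p \in J) : nat) + Tplus p J].
Proof.
move=> idJ; rewrite -toggle_ranks1 /toggle_ranks /= cats0.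
have rk_enum x : x \in rank_enum (rk p) -> rk x = rk p.
  by rewrite mem_enum inE => /eqP.
move: rk_enum (enum_uniq [pred q | rk q == rk p]); rewrite -/(rank_enum _).
have /splitPr[e1 e2] : p \in rank_enum (rk p) by rewrite mem_enum inE.
rewrite cat_uniq /= => rk_e /and3P[_ /norP[pe1 _] /andP[pe2 _]].
have off_rank x : rk x != rk p -> x \notin e1 /\ x \notin e2.
  move=> xp; split; apply: contra xp => xe.
    by rewrite rk_e // mem_cat xe.
  by rewrite rk_e // mem_cat in_cons xe !orbT.
have lower x : covers x p -> x \notin e1 /\ x \notin e2.
  by move=> /rk_cover rkp; apply: off_rank; rewrite rkp ltn_eqF.
have upper x : covers p x -> x \notin e1 /\ x \notin e2.
  by move=> /rk_cover rkx; apply: off_rank; rewrite rkx gtn_eqF.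
rewrite foldr_cat /=; set J' := foldr _ J e2; set K := toggle p J'.
have idJ' : order_ideal J' by apply: foldr_toggle_ideal.
have idK : order_ideal K by apply: toggle_ideal.
have plusJ : Tplus p J' = Tplus p J.
  by apply: Tplus_foldr_toggle => // x /lower[].
have minusJ : Tminus p J' = Tminus p J.
  by apply: Tminus_foldr_toggle => // x /upper[].
have plusK : Tplus p (foldr (@toggle _ T) K e1) = Tplus p K.
  by apply: Tplus_foldr_toggle => // x /lower[].
have minusK : Tminus p (foldr (@toggle _ T) K e1) = Tminus p K.
  by apply: Tminus_foldr_toggle => // x /upper[].
have [flip_plus flip_minus flip_mem] := toggle_flip p idJ'.
rewrite plusK minusK in_foldr_toggle_other // flip_plus flip_minus plusJ minusJ.
by rewrite -plusJ -minusJ -(in_foldr_toggle_other J pe2).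
Qed.

End Ranks.

Section OrbitSums.
Variables (d : Order.disp_t) (T : finPOrderType d) (rk : T -> nat).
Hypothesis rk_cover : forall p q : T, covers p q -> rk q = (rk p).+1.
Variables (O : {set {set T}}) (s1 s2 : seq nat) (p : T).
Hypothesis uniq_s : uniq (s1 ++ rk p :: s2).
Hypothesis O_ideal : {in O, forall X, order_ideal X}.
Local Notation F := (toggle_ranks rk (s1 ++ rk p :: s2)).
Hypothesis O_stable : {in O, forall X, F X \in O}.
Local Notation B := (toggle_ranks rk s2).
Local Notation K X := (toggle_rank rk (rk p) (B X)).

Lemma sum_toggle_ranks_stable (f : {set T} -> nat) :
  \sum_(X in O) f (F X) = \sum_(X in O) f X.
Proof.
apply: big_stable O_stable => X Y XO YO.
by apply: toggle_ranks_inj; apply: O_ideal.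
Qed.

Lemma toggle_ranks_split X : F X = toggle_ranks rk s1 (K X).
Proof. by rewrite toggle_ranks_cat toggle_ranks_cons. Qed.

Let rk_p_s1 : rk p \notin s1.
Proof. by move: uniq_s; rewrite cat_uniq /= => /and3P[_ /norP[]]. Qed.

Let rk_p_s2 : rk p \notin s2.
Proof. by move: uniq_s; rewrite cat_uniq /= => /and3P[_ _ /andP[]]. Qed.

Let disjoint_s j : j \in s2 -> j \notin s1.
Proof.
move: uniq_s; rewrite cat_uniq /= => /and3P[_ /norP[_ /hasPn s2_s1] _].
exact: s2_s1.
Qed.

Let ideal_B X : X \in O -> order_ideal (B X).
Proof. by move=> XO; apply/toggle_ranks_ideal/O_ideal. Qed.

Let ideal_K X : X \in O -> order_ideal (K X).
Proof. by move=> XO; rewrite -toggle_ranks1 toggle_ranks_ideal ?ideal_B. Qed.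

Lemma sum_Tplus_eq_Tminus_before :
  \sum_(X in O) Tplus p (B X) = \sum_(X in O) Tminus p (B X).
Proof.
have mem_sums :
    \sum_(X in O) ((p \in K X) : nat) = \sum_(X in O) ((p \in B X) : nat).
  transitivity (\sum_(X in O) ((p \in F X) : nat)).
    by apply: eq_bigr => X _; rewrite toggle_ranks_split in_toggle_ranks_other.
  rewrite (sum_toggle_ranks_stable (fun X => (p \in X) : nat)).
  by apply: eq_bigr => X _; rewrite in_toggle_ranks_other.
have : \sum_(X in O) (((p \in K X) : nat) + Tminus p (B X))
    = \sum_(X in O) (((p \in B X) : nat) + Tplus p (B X)).
  by apply: eq_bigr => X XO; case: (toggle_rank_flip rk_cover p (ideal_B XO)).
by rewrite !big_split /= mem_sums => /addnI.
Qed.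

Lemma sum_Tplus_before :
  \sum_(X in O) Tplus p X = \sum_(X in O) Tplus p (B X).
Proof.
have [lower_s2 | lower_s2] := boolP ((rk p).-1 \in s2); last first.
  by apply: eq_bigr => X XO; rewrite Tplus_toggle_ranks ?O_ideal.
rewrite -(sum_toggle_ranks_stable (Tplus p)) sum_Tplus_eq_Tminus_before.
apply: eq_bigr => X XO.
have [plusK _ _] := toggle_rank_flip rk_cover p (ideal_B XO).
by rewrite toggle_ranks_split Tplus_toggle_ranks ?ideal_K ?rk_p_s1 ?disjoint_s.
Qed.

Lemma sum_Tminus_before :
  \sum_(X in O) Tminus p X = \sum_(X in O) Tminus p (B X).
Proof.
have [upper_s2 | upper_s2] := boolP ((rk p).+1 \in s2); last first.
  by apply: eq_bigr => X XO; rewrite Tminus_toggle_ranks ?O_ideal.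
rewrite -(sum_toggle_ranks_stable (Tminus p)) -sum_Tplus_eq_Tminus_before.
apply: eq_bigr => X XO.
have [_ minusK _] := toggle_rank_flip rk_cover p (ideal_B XO).
by rewrite toggle_ranks_split Tminus_toggle_ranks ?ideal_K ?rk_p_s1 ?disjoint_s.
Qed.

End OrbitSums.

Lemma sum_Tplus_eq_Tminus d (T : finPOrderType d) (rk : T -> nat)
    (O : {set {set T}}) (s : seq nat) (p : T) :
  (forall p q : T, covers p q -> rk q = (rk p).+1) ->
  uniq s -> rk p \in s -> {in O, forall X, order_ideal X} ->
  {in O, forall X, toggle_ranks rk s X \in O} ->
  \sum_(X in O) Tplus p X = \sum_(X in O) Tminus p X.
Proof.
move=> rk_cover uniq_s s_p O_ideal; move: uniq_s; case/splitPr: s_p => s1 s2.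
move=> uniq_s O_stable.
rewrite (sum_Tplus_before rk_cover uniq_s O_ideal O_stable).
rewrite (sum_Tminus_before rk_cover uniq_s O_ideal O_stable).
exact: (sum_Tplus_eq_Tminus_before rk_cover uniq_s O_ideal O_stable).
Qed.

Section Orbits.
Variables (d : Order.disp_t) (T : finPOrderType d).
Implicit Types (F : {set T} -> {set T}) (O : {set {set T}}).

Lemma orbit_set_ideal F I0 : (forall X, order_ideal X -> order_ideal (F X)) ->
  order_ideal I0 -> {in orbit_set F I0, forall X, order_ideal X}.
Proof.
move=> F_ideal idI0 X; rewrite inE => /iter_findex <-.
by elim: findex => //= n; apply: F_ideal.
Qed.

Lemma orbit_set_stable F I0 :
  {in orbit_set F I0, forall X, F X \in orbit_set F I0}.
Proof. by move=> X; rewrite !inE => /connect_trans; apply; apply: fconnect1. Qed.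

Lemma expect_uniform O (f : {set T} -> nat) : {in O, forall X, order_ideal X} ->
  expect (uniform_on O) f = (#|O|%:R^-1 * (\sum_(X in O) f X)%:R)%R.
Proof.
move=> O_ideal; rewrite /expect natr_sum mulr_sumr big_mkcond [RHS]big_mkcond.
apply: eq_bigr => X _; rewrite /uniform_on.
have [XO | _] := boolP (X \in O); last by rewrite mul0r if_same.
by rewrite inE O_ideal.
Qed.

End Orbits.

Theorem lemma8p5 (d : Order.disp_t) (T : finPOrderType d) (rk : T -> nat)
  (r : nat) (sigma : {perm 'I_r.+1}) (I0 : {set T}) :
  poset_connected T ->
  rank_function rk ->
  r = (\max_(p : T) rk p)%N ->
  I0 \in JP T ->
  toggle_symmetric (uniform_on (orbit_set (Phi_row rk sigma) I0)).
Proof.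
move=> _ [_ rk_cover] r_max; rewrite inE => idI0 p.
have PhiE := Phi_row_toggle_ranks rk sigma.
set s := [seq nat_of_ord (sigma i) | i <- enum 'I_r.+1] in PhiE.
have O_ideal : {in orbit_set (Phi_row rk sigma) I0, forall X, order_ideal X}.
  by apply: orbit_set_ideal idI0 => X; rewrite PhiE; apply: toggle_ranks_ideal.
rewrite !expect_uniform //; congr (_ * _%:R)%R.
apply: (sum_Tplus_eq_Tminus (s := s) rk_cover) O_ideal _.
- by rewrite map_inj_uniq ?enum_uniq // => i j /val_inj/perm_inj.
- have rk_p : (rk p < r.+1)%N by rewrite ltnS r_max leq_bigmax.
  apply/mapP; exists (perm_inv sigma (Ordinal rk_p)).
    by rewrite mem_enum.
  by rewrite permKV.
- by move=> X /orbit_set_stable; rewrite PhiE.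
Qed.
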